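(* The language classes GRLOWJ and GLLOWJ are incomparable (neither is a subset of the other).
   Context: A generalized right linear one-way jumping finite automaton (GRLOWJFA) is a tuple A = (Σ, Q, q_0, F, R) with alphabet Σ, finite state set Q, start state q_0, final states F ⊆ Q, and a finite set of rules R ⊂ Q × Σ^+ × Q such that for each p ∈ Q and w ∈ Σ^+ there is at most one q with (p,w,q) ∈ R (rule (p,w,q): from p, delete w, go to q). For p ∈ Q let Σ_p = {w ∈ Σ^+ : (p,w,q) ∈ R for some q}. Configurations are strings in Σ^* Q Σ^*, with moves: (1) for t,u,v ∈ Σ^* and (p,x,q) ∈ R, tpuxv ⇒ tuqv, provided u contains no word of Σ_p as a subword and there is no nonempty suffix u_2 of u and nonempty prefix x_1 of x with u_2x_1 = x; (2) for x ∈ Σ^+ and y ∈ Σ^* such that y contains no word of Σ_p as a subword, xpy ⇒ pxy. Accepted language: {w ∈ Σ^* : q_0 w ⇒^* q_f for some q_f ∈ F}. A generalized left linear one-way jumping finite automaton (GLLOWJFA) is a tuple A = (Σ, Q, q_0, F, R) with R ⊂ Q × Σ^+ × Q finite; a rule (q,w,p) means from p, delete w, go to q, and for each p and w there is at most one such q. For p ∈ Q let Σ_p = {w ∈ Σ^+ : (q,w,p) ∈ R for some q}. Configurations are strings in Σ^* Q Σ^*, with moves: (1) for t,u,v ∈ Σ^* and (q,x,p) ∈ R, vxupt moves to vqut, provided u contains no word of Σ_p as a subword and there is no nonempty prefix u_1 of u and nonempty suffix x_2 of x with x_2u_1 = x; (2) for x ∈ Σ^+ and y ∈ Σ^* such that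 y contains no word of Σ_p as a subword, ypx moves to yxp. Accepted language: {w ∈ Σ^* : w q_0 leads in zero or more moves to q_f for some q_f ∈ F}. GRLOWJ and GLLOWJ denote the classes of languages accepted by GRLOWJFA and GLLOWJFA respectively. *)

From mathcomp Require Import all_boot.
Set Implicit Arguments. Unset Strict Implicit. Unset Printing Implicit Defensive.

(* Rules of an automaton: a finite set R of triples (p, w, q) with w nonempty.
   A configuration in Sigma^* Q Sigma^* is represented as (left, state, right). *)

Section GOWJFA.
Variables (S : finType) (Q : finType).
Notation rules := (seq (Q * seq S * Q)).

Definition cfg := (seq S * Q * seq S)%type.

Definition rules_nonempty (R : rules) : Prop :=
  forall p w q, (p, w, q) \in R -> w != [::].

Definition R_det (R : rules) : Prop :=
  forall p w q1 q2, (p, w, q1) \in R -> (p, w, q2) \in R -> q1 = q2.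

Definition R_avoids (R : rules) (p : Q) (y : seq S) : Prop :=
  forall w q, (p, w, q) \in R -> ~~ infix w y.

Inductive R_step (R : rules) : cfg -> cfg -> Prop :=
| R_step_del : forall (t u v x : seq S) (p q : Q),
    (p, x, q) \in R ->
    R_avoids R p u ->
    ~ (exists u2 x1 : seq S, [/\ u2 != [::], x1 != [::], suffix u2 u,
                                 prefix x1 x & u2 ++ x1 = x]) ->
    R_step R (t, p, u ++ x ++ v) (t ++ u, q, v)
| R_step_jump : forall (x y : seq S) (p : Q),
    x != [::] ->
    R_avoids R p y ->
    R_step R (x, p, y) ([::], p, x ++ y).

(* a rule (q,w,p): from p, delete w, go to q; for each p and w at most one q *)
Definition L_det (R : rules) : Prop :=
  forall p w q1 q2, (q1, w, p) \in R -> (q2, w, p) \in R -> q1 = q2.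

Definition L_avoids (R : rules) (p : Q) (y : seq S) : Prop :=
  forall w q, (q, w, p) \in R -> ~~ infix w y.

Inductive L_step (R : rules) : cfg -> cfg -> Prop :=
| L_step_del : forall (t u v x : seq S) (p q : Q),
    (q, x, p) \in R ->
    L_avoids R p u ->
    ~ (exists u1 x2 : seq S, [/\ u1 != [::], x2 != [::], prefix u1 u,
                                 suffix x2 x & x2 ++ u1 = x]) ->
    L_step R (v ++ x ++ u, p, t) (v, q, u ++ t)
| L_step_jump : forall (x y : seq S) (p : Q),
    x != [::] ->
    L_avoids R p y ->
    L_step R (y, p, x) (y ++ x, p, [::]).

Inductive star (st : cfg -> cfg -> Prop) : cfg -> cfg -> Prop :=
| star_refl : forall c, star st c c
| star_step : forall c1 c2 c3, st c1 c2 -> star st c2 c3 -> star st c1 c3.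

Definition R_accepts (R : rules) (q0 : Q) (F : pred Q) (w : seq S) : Prop :=
  exists2 qf, qf \in F & star (R_step R) ([::], q0, w) ([::], qf, [::]).

Definition L_accepts (R : rules) (q0 : Q) (F : pred Q) (w : seq S) : Prop :=
  exists2 qf, qf \in F & star (L_step R) (w, q0, [::]) ([::], qf, [::]).

End GOWJFA.

Definition language (S : finType) := seq S -> Prop.

Definition GRLOWJ (S : finType) (L : language S) : Prop :=
  exists (Q : finType) (q0 : Q) (F : pred Q) (R : seq (Q * seq S * Q)),
    [/\ rules_nonempty R, R_det R & forall w, L w <-> R_accepts R q0 F w].

Definition GLLOWJ (S : finType) (L : language S) : Prop :=
  exists (Q : finType) (q0 : Q) (F : pred Q) (R : seq (Q * seq S * Q)),
    [/\ rules_nonempty R, L_det R & forall w, L w <-> L_accepts R q0 F w].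

From mathcomp Require Import all_boot zify.
Set Implicit Arguments. Unset Strict Implicit. Unset Printing Implicit Defensive.

(* Reversing the input and the rule words turns a left linear automaton into a
   right linear one and back, and it exchanges the languages c_balanced
   = { c g | g in {a,b}^*, |g|_a = |g|_b } and balanced_c = { g c | same g }.
   So it suffices that c_balanced is accepted by a right linear automaton
   (check the leading c, then alternately delete the first a and the first b,
   jumping back when the wanted letter is only left of the head) while
   balanced_c is not.

   For the latter, run an automaton with N states and rule words of length at
   most K on a^n b^n c, n = (N+1)KN + 1.  The c can only be deleted by the very
   last step, otherwise the letters left of it are read after a jump and an
   accepted word not ending in c arises.  Between two jumps at most KN letters
   a are deleted: while only a's are deleted, a repeated state would have a
   shorter run to it, giving an accepted word with fewer a's than b's, and
   once a b is deleted no a is left to its right.  Finally no state jumps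
   twice: after a jump in state j, any c-free run of rules from j back to j
   can be replayed after the c of the input, so a second jump in j would give
   an accepted word not ending in c.  Hence fewer than n letters a are deleted
   in all, although acceptance requires all of them to be. *)

Section Star.
Variables (S Q : finType) (st : cfg S Q -> cfg S Q -> Prop).

Lemma star1 c1 c2 : st c1 c2 -> star st c1 c2.
Proof. by move=> h; apply: star_step h (star_refl _ _). Qed.

Lemma star_trans c1 c2 c3 : star st c1 c2 -> star st c2 c3 -> star st c1 c3.
Proof. by elim=> // c c' c'' h _ IH /IH; apply: star_step h. Qed.

Lemma star_map (st' : cfg S Q -> cfg S Q -> Prop) (f : cfg S Q -> cfg S Q) c1 c2 :
  (forall c c', st c c' -> st' (f c) (f c')) -> star st c1 c2 -> star st' (f c1) (f c2).
Proof.
move=> hf; elim=> [c|c c' c'' h _ IH]; first exact: star_refl.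
exact: star_step (hf _ _ h) IH.
Qed.

End Star.

Section RightLinear.
Variables (S Q : finType) (R : seq (Q * seq S * Q)).
Hypothesis R_ne : rules_nonempty R.

Lemma R_avoids_nil p : R_avoids R p [::].
Proof. by move=> w q /R_ne; rewrite infixs0. Qed.

Definition straddles (u x : seq S) := exists u2 x1 : seq S,
  [/\ u2 != [::], x1 != [::], suffix u2 u, prefix x1 x & u2 ++ x1 = x].

Lemma R_step_head t p x q T : (p, x, q) \in R -> R_step R (t, p, x ++ T) (t, q, T).
Proof.
move=> hr; have := @R_step_del _ _ R t [::] T x p q hr (@R_avoids_nil p).
rewrite cats0; apply=> -[u2 [x1 [u2_ne _ + _ _]]].
by rewrite suffixs0 (negbTE u2_ne).
Qed.

Lemma R_step_right_nil t q c : R_step R (t, q, [::]) c -> t != [::] /\ c = ([::], q, t).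
Proof.
move E: (t, q, [::]) => c0 h; case: h E => [t' u v x p q' hr _ _|x y p hx _] [-> ->].
  by case: u => [|//]; case: x hr => [/R_ne|//].
by move=> <-; rewrite cats0.
Qed.

Definition head_run p X q := forall t T, star (R_step R) (t, p, X ++ T) (t, q, T).

Lemma head_run_nil p : head_run p [::] p.
Proof. by move=> t T; apply: star_refl. Qed.

Lemma head_run_cons p x q X r : (p, x, q) \in R -> head_run q X r -> head_run p (x ++ X) r.
Proof.
by move=> hr hX t T; rewrite -catA; apply: star_step (R_step_head t _ hr) (hX t T).
Qed.

Variable F : pred Q.

Definition accepting (c : cfg S Q) :=
  exists2 qf, qf \in F & star (R_step R) c ([::], qf, [::]).

Lemma accepting_right_nil t q :
  accepting (t, q, [::]) -> (t = [::] /\ q \in F) \/ (t != [::] /\ accepting ([::], q, t)).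
Proof.
case=> qf hqf; move Es: (t, q, [::]) => c; move Ef: ([::], qf, [::]) => c' hst.
case: hst Es Ef => [c0 <- [<- <-]|c1 c2 c3 h hst ? ?]; subst; first by left.
by have [t_ne E] := R_step_right_nil h; right; split; last exists qf; rewrite -?E.
Qed.

End RightLinear.

Section Mirror.
Variables (S Q : finType).
Implicit Types (R : seq (Q * seq S * Q)) (c : cfg S Q).

Definition mirror_rules R : seq (Q * seq S * Q) := [seq (e.2, rev e.1.2, e.1.1) | e <- R].

Definition mirror_cfg c : cfg S Q := (rev c.2, c.1.2, rev c.1.1).

Lemma mem_mirror_rules R p w q : ((p, w, q) \in mirror_rules R) = ((q, rev w, p) \in R).
Proof.
apply/mapP/idP => [[[[q' w'] p'] h [-> -> ->]]|h]; first by rewrite revK.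
by exists (q, rev w, p); rewrite //= revK.
Qed.

Lemma mirror_rulesK : involutive mirror_rules.
Proof.
by move=> R; rewrite /mirror_rules -map_comp map_id_in // => -[[p w] q] _ /=; rewrite revK.
Qed.

Lemma rev_eq_nil (s : seq S) : (rev s == [::]) = (s == [::]).
Proof. by rewrite -!nilpE rev_nilp. Qed.

Lemma mirror_rules_nonempty R : rules_nonempty R -> rules_nonempty (mirror_rules R).
Proof. by move=> hR p w q; rewrite mem_mirror_rules => /hR; rewrite rev_eq_nil. Qed.

Lemma mirror_rules_R_det R : L_det R -> R_det (mirror_rules R).
Proof. by move=> hR p w q1 q2; rewrite !mem_mirror_rules; apply: hR. Qed.

Lemma mirror_rules_L_det R : R_det R -> L_det (mirror_rules R).
Proof. by move=> hR p w q1 q2; rewrite !mem_mirror_rules; apply: hR. Qed.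

Lemma L_step_mirror R c c' :
  L_step R c c' -> R_step (mirror_rules R) (mirror_cfg c) (mirror_cfg c').
Proof.
have avoids p y : L_avoids R p y -> R_avoids (mirror_rules R) p (rev y).
  by move=> hy w q; rewrite mem_mirror_rules => /hy; rewrite -infix_rev revK.
case=> [t u v x p q hr hu hn|x y p hx hy] /=; last first.
  by rewrite /mirror_cfg /= rev_cat; apply: R_step_jump; [rewrite rev_eq_nil | exact: avoids].
rewrite /mirror_cfg /= !rev_cat -catA.
apply: R_step_del; [by rewrite mem_mirror_rules revK | exact: avoids |].
move=> [u2 [x1 [u2_ne x1_ne hu2 hx1 E]]]; apply: hn; exists (rev u2), (rev x1).
by rewrite !rev_eq_nil prefix_revLR suffix_revLR -rev_cat E revK; split.
Qed.

Lemma R_step_mirror R c c' :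
  R_step (mirror_rules R) c c' -> L_step R (mirror_cfg c) (mirror_cfg c').
Proof.
have avoids p y : R_avoids (mirror_rules R) p y -> L_avoids R p (rev y).
  by move=> hy w q hr; rewrite -infix_rev revK; apply: (hy _ q); rewrite mem_mirror_rules revK.
case=> [t u v x p q hr hu hn|x y p hx hy] /=; last first.
  by rewrite /mirror_cfg /= rev_cat; apply: L_step_jump; [rewrite rev_eq_nil | exact: avoids].
rewrite /mirror_cfg /= !rev_cat -catA.
apply: L_step_del; [by rewrite -mem_mirror_rules | exact: avoids |].
move=> [u1 [x2 [u1_ne x2_ne hu1 hx2 E]]]; apply: hn; exists (rev u1), (rev x2).
by rewrite !rev_eq_nil suffix_revLR prefix_revLR -rev_cat E revK; split.
Qed.

Lemma L_accepts_mirror R q0 F w :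
  L_accepts R q0 F w <-> R_accepts (mirror_rules R) q0 F (rev w).
Proof.
split=> -[qf hqf hst]; exists qf => //; first exact: star_map (@L_step_mirror R) hst.
by have := star_map (@R_step_mirror R) hst; rewrite /mirror_cfg /= revK.
Qed.

End Mirror.

Lemma GRLOWJ_ext (S : finType) (L1 L2 : language S) :
  (forall w, L1 w <-> L2 w) -> GRLOWJ L1 -> GRLOWJ L2.
Proof.
move=> E [Q [q0 [F [R [hne hdet hL]]]]]; exists Q, q0, F, R; split=> // w.
by rewrite -E.
Qed.

Lemma GLLOWJ_GRLOWJ_rev (S : finType) (L : language S) :
  GLLOWJ L <-> GRLOWJ (fun w => L (rev w)).
Proof.
split=> -[Q [q0 [F [R [hne hdet hL]]]]]; exists Q, q0, F, (mirror_rules R).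
  split=> [||w]; [exact: mirror_rules_nonempty | exact: mirror_rules_R_det |].
  by rewrite hL L_accepts_mirror revK.
split=> [||w]; [exact: mirror_rules_nonempty | exact: mirror_rules_L_det |].
by rewrite L_accepts_mirror mirror_rulesK -hL revK.
Qed.

Notation letter := (option bool).
Notation la := (Some true : letter).
Notation lb := (Some false : letter).
Notation lc := (None : letter).

Definition balanced (g : seq letter) := (lc \notin g) && (count_mem la g == count_mem lb g).

Definition c_balanced : language letter := fun w => exists2 g, w = lc :: g & balanced g.

Definition balanced_c : language letter := fun w => exists2 g, w = rcons g lc & balanced g.

Lemma balanced_c_rev w : balanced_c (rev w) <-> c_balanced w.
Proof.
have bal_rev g : balanced (rev g) = balanced g by rewrite /balanced mem_rev !count_rev.
split=> -[g Eg hg]; exists (rev g); rewrite ?bal_rev //.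
  by rewrite -[w]revK Eg rev_rcons.
by rewrite Eg rev_cons.
Qed.

(* [q_start] must delete the first letter of the input, since every letter is
   one of its rule words, and [q_dead] has no rules. *)
Notation state := (option letter).
Notation q_start := (None : state).
Notation q_dead := (Some lc : state).
Notation q_a := (Some la : state).
Notation q_b := (Some lb : state).

Definition c_balanced_rules : seq (state * seq letter * state) :=
  [:: (q_start, [:: lc], q_a); (q_start, [:: la], q_dead); (q_start, [:: lb], q_dead);
      (q_a, [:: la], q_b); (q_b, [:: lb], q_a)].

Lemma c_balanced_rules_nonempty : rules_nonempty c_balanced_rules.
Proof. by move=> p w q /(allP (isT : all (fun e => e.1.2 != [::]) c_balanced_rules)). Qed.

Lemma c_balanced_rules_det : R_det c_balanced_rules.
Proof.
have det : all (fun e1 => all (fun e2 => (e1.1 == e2.1) ==> (e1 == e2)) c_balanced_rules)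
  c_balanced_rules := isT.
by move=> p w q1 q2 /(allP det) /allP h /h /=; rewrite eqxx => /eqP[].
Qed.

Lemma letter_rule b w q :
  (Some (Some b), w, q) \in c_balanced_rules -> w = [:: Some b] /\ q = Some (Some (~~ b)).
Proof.
have spec : all (fun e : state * seq letter * state => if e.1.1 is Some (Some b)
  then (e.1.2 == [:: Some b]) && (e.2 == Some (Some (~~ b))) else true) c_balanced_rules := isT.
by move=> /(allP spec) /= /andP[/eqP -> /eqP ->].
Qed.

Lemma letter_rule_mem b : (Some (Some b), [:: Some b], Some (Some (~~ b))) \in c_balanced_rules.
Proof. by case: b. Qed.

Lemma R_avoids_letter b r : Some b \notin r -> R_avoids c_balanced_rules (Some (Some b)) r.
Proof. by move=> hr w q /letter_rule[-> _]; rewrite infix1s. Qed.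

Lemma R_step_first_letter b t r : Some b \in r -> exists u v,
  r = u ++ Some b :: v /\
  R_step c_balanced_rules (t, Some (Some b), r) (t ++ u, Some (Some (~~ b)), v).
Proof.
move=> hb; set i := index (Some b) r.
exists (take i r), (drop i.+1 r).
have Er : r = take i r ++ Some b :: drop i.+1 r.
  by rewrite -{1}(cat_take_drop i r) (drop_nth (Some b)) ?index_mem ?nth_index.
split=> //; rewrite {1}Er -cat1s; apply: R_step_del (letter_rule_mem b) _ _.
  by apply: R_avoids_letter; apply/negP => /index_ltn; rewrite ltnn.
by move=> [[|y u2] [[|z x1] [//= _ _ _ _ [_]]]]; case: u2.
Qed.

Lemma erase_letter b t r : Some b \in t ++ r -> exists t' r',
  star (R_step c_balanced_rules) (t, Some (Some b), r) (t', Some (Some (~~ b)), r') /\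
  perm_eq (t ++ r) (Some b :: t' ++ r').
Proof.
have erase_right t0 r0 : Some b \in r0 -> exists t' r',
    star (R_step c_balanced_rules) (t0, Some (Some b), r0) (t', Some (Some (~~ b)), r') /\
    perm_eq (t0 ++ r0) (Some b :: t' ++ r').
  move=> /(R_step_first_letter t0) [u [v [-> h]]]; exists (t0 ++ u), v; split.
    exact: star1 h.
  by rewrite catA -cat1s perm_catCA.
case: (boolP (Some b \in r)) => [/erase_right // | hr hb].
have ht : t != [::] by apply: contraNneq hr => Et; rewrite Et in hb.
have [t' [r' [hst hperm]]] := erase_right [::] (t ++ r) hb.
exists t', r'; split=> //.
exact: star_step (R_step_jump ht (R_avoids_letter hr)) hst.
Qed.

Definition c_balanced_final : pred state := pred1 q_a.

Lemma start_rule y : (q_start, [:: y], if y == lc then q_a else q_dead) \in c_balanced_rules.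
Proof. by case: y => [[]|]. Qed.

Lemma start_rule_target x q :
  (q_start, x, q) \in c_balanced_rules -> x = [:: lc] /\ q = q_a \/ q = q_dead.
Proof.
have spec : all (fun e : state * seq letter * state => (e.1.1 == q_start) ==>
  ((e.1.2 == [:: lc]) && (e.2 == q_a) || (e.2 == q_dead))) c_balanced_rules := isT.
by move=> /(allP spec) /= /orP[/andP[/eqP -> /eqP ->]|/eqP ->]; [left | right].
Qed.

(* The letters deleted after the initial c are, up to order, (ab)^k in state
   [q_a] and (ab)^k a in state [q_b]. *)
Definition c_balanced_inv (w : seq letter) (c : cfg letter state) : Prop :=
  let: (t, s, r) := c in
  match s with
  | None => t = [::] /\ r = w
  | Some None => True
  | Some (Some b) => exists2 g, w = lc :: g &
      count_mem lc (t ++ r) = count_mem lc g /\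
      count_mem la (t ++ r) + ~~ b + count_mem lb g = count_mem lb (t ++ r) + count_mem la g
  end.

Lemma c_balanced_inv_step w c c' :
  R_step c_balanced_rules c c' -> c_balanced_inv w c -> c_balanced_inv w c'.
Proof.
case=> [t u v x [[b|]|] q hr hu _|x y [[b|]|] hx _] //=; last by case=> Ex; rewrite Ex in hx.
- have [-> ->] := letter_rule hr; case=> g Eg [hc hab]; exists g => //.
  by move: hc hab; rewrite !count_cat; case: b {hr hu} => /=; lia.
- case=> -> Ew; have u0 : u = [::].
    by case: u hu {Ew} => // y u /(_ _ _ (start_rule y)); rewrite infix1s inE eqxx.
  subst u; move: Ew; have [[-> ->] <-|-> //] := start_rule_target hr.
  by exists v => //=; rewrite addn0 addnC.
Qed.

Lemma c_balanced_inv_star w c c' :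
  star (R_step c_balanced_rules) c c' -> c_balanced_inv w c -> c_balanced_inv w c'.
Proof. by elim=> // c1 c2 c3 h _ IH /(c_balanced_inv_step h). Qed.

Lemma c_balanced_rules_sound w :
  R_accepts c_balanced_rules q_start c_balanced_final w -> c_balanced w.
Proof.
case=> qf; rewrite inE => /eqP -> /c_balanced_inv_star /(_ (conj erefl erefl)) [g Eg] /=.
case=> hc hab; exists g => //; apply/andP; split.
  by apply/count_memPn; rewrite -hc.
by apply/eqP; move: hab => /=; lia.
Qed.

Lemma no_letter (s : seq letter) : la \notin s -> lb \notin s -> lc \notin s -> s = [::].
Proof. by case: s => // -[[]|] s; rewrite !inE eqxx ?andbF. Qed.

Lemma run_balanced n t r : size (t ++ r) <= n -> lc \notin t ++ r ->
  count_mem la (t ++ r) = count_mem lb (t ++ r) ->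
  star (R_step c_balanced_rules) (t, q_a, r) ([::], q_a, [::]).
Proof.
elim: n t r => [|n IH] t r hs hc hab.
  by move: hs; rewrite leqn0 -/(nilp _) cat_nilp => /andP[/nilP -> /nilP ->]; apply: star_refl.
case: (boolP (la \in t ++ r)) => ha; last first.
  have hb : lb \notin t ++ r by apply/count_memPn; rewrite -hab; apply/count_memPn.
  have /nilP := no_letter ha hb hc; rewrite cat_nilp => /andP[/nilP -> /nilP ->].
  exact: star_refl.
have [t1 [r1 [st1 p1]]] := erase_letter ha.
have hb : lb \in t1 ++ r1.
  by rewrite -has_pred1 has_count; move: hab (permP p1 (pred1 la)) (permP p1 (pred1 lb)) => /=; lia.
have [t2 [r2 [st2 p2]]] := erase_letter hb.
apply: star_trans st1 (star_trans st2 (IH _ _ _ _ _)).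
- by move: hs; rewrite (perm_size p1) /= (perm_size p2) /=; lia.
- apply/count_memPn; move: hc (permP p1 (pred1 lc)) (permP p2 (pred1 lc)).
  by move=> /count_memPn /=; lia.
- move: hab (permP p1 (pred1 la)) (permP p1 (pred1 lb)).
  by move: (permP p2 (pred1 la)) (permP p2 (pred1 lb)) => /=; lia.
Qed.

Lemma c_balanced_rules_complete w :
  c_balanced w -> R_accepts c_balanced_rules q_start c_balanced_final w.
Proof.
case=> g -> /andP[hc /eqP hab]; exists q_a; first by rewrite inE.
apply: star_step (R_step_head c_balanced_rules_nonempty [::] g (start_rule lc)) _.
exact: (@run_balanced _ [::] g (leqnn _) hc hab).
Qed.

Lemma c_balanced_GRLOWJ : GRLOWJ c_balanced.
Proof.
exists state, q_start, c_balanced_final, c_balanced_rules; split=> [||w].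
- exact: c_balanced_rules_nonempty.
- exact: c_balanced_rules_det.
- by split; [exact: c_balanced_rules_complete | exact: c_balanced_rules_sound].
Qed.

Definition letter_rank (y : letter) :=
  match y with Some true => 0 | Some false => 1 | None => 2 end.

Definition letter_le (y z : letter) := letter_rank y <= letter_rank z.

Lemma letter_le_trans : transitive letter_le.
Proof. by move=> y x z; apply: leq_trans. Qed.

Lemma sorted_nseq_cat y i s :
  all (letter_le y) s -> sorted letter_le s -> sorted letter_le (nseq i y ++ s).
Proof.
move=> hy hs; elim: i => //= i IH.
by rewrite (path_sortedE letter_le_trans) all_cat all_nseq /letter_le leqnn orbT hy.
Qed.

Lemma sorted_b_notin_a s1 s2 : sorted letter_le (s1 ++ s2) -> lb \in s1 -> la \notin s2.
Proof.
rewrite (sorted_pairwise letter_le_trans) pairwise_cat => /and3P[/allrelP h _ _] hb.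
by apply/negP => /(h _ _ hb).
Qed.

Lemma count_bound (a b s A k N : nat) :
  a <= s * k + A -> A + b <= k -> s <= N -> a + b < (N.+1 * k).+1.
Proof. by move=> ha hb hs; have := leq_mul hs (leqnn k); rewrite mulSn; lia. Qed.

Lemma last_notin d (s : seq letter) : s != [::] -> lc \notin s -> last d s != lc.
Proof. by case/lastP: s => // s y _; rewrite last_rcons mem_rcons inE eq_sym => /norP[]. Qed.

Section BalancedCAutomaton.
Variables (Q : finType) (q0 : Q) (F : pred Q) (R : seq (Q * seq letter * Q)).
Hypotheses (R_ne : rules_nonempty R) (R_lang : forall w, balanced_c w <-> R_accepts R q0 F w).

Let K := \max_(e <- R) size e.1.2.
Let N := #|Q|.
Let n := (N.+1 * (K * N)).+1.

(* The element type is fixed so that all counts are syntactically equal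
   terms, as [lia] needs. *)
Local Notation ca := (@count letter (pred1 la)).
Local Notation cb := (@count letter (pred1 lb)).

Lemma rule_size_le p x q : (p, x, q) \in R -> size x <= K.
Proof. by move=> hr; apply: (@leq_bigmax_seq _ R xpredT (fun e => size e.1.2) _ hr). Qed.

Lemma uniq_size_le (s : seq Q) : uniq s -> size s <= N.
Proof. by move=> hs; rewrite -(card_uniqP hs) max_card. Qed.

Lemma accepted_last w : R_accepts R q0 F w -> last lc w = lc.
Proof. by case/R_lang=> g -> _; rewrite last_rcons. Qed.

Lemma accepted_balanced w : R_accepts R q0 F w -> ca w = cb w.
Proof. by case/R_lang=> g -> /andP[_ /eqP]; rewrite -!cats1 !count_cat => ->. Qed.

Definition prefix_run (D : seq letter) (p : Q) :=
  forall T, star (R_step R) ([::], q0, D ++ T) ([::], p, T).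

Lemma prefix_run_rule D p x q : (p, x, q) \in R -> prefix_run D p -> prefix_run (D ++ x) q.
Proof.
move=> hr hD T; rewrite -catA; apply: star_trans (hD _) _.
exact: star1 (R_step_head R_ne _ _ hr).
Qed.

Lemma prefix_run_accepting D p w :
  prefix_run D p -> accepting R F ([::], p, w) -> R_accepts R q0 F (D ++ w).
Proof. by move=> hD [qf hqf hst]; exists qf => //; apply: star_trans (hD w) hst. Qed.

Definition shortcut (D : seq letter) (p : Q) :=
  exists D', [/\ prefix_run D' p, ca D' < ca D & cb D' = cb D].

Lemma shortcut_rule D p x q : (p, x, q) \in R -> shortcut D p -> shortcut (D ++ x) q.
Proof.
move=> hr [D' [hD' lt_a eq_b]]; exists (D' ++ x); split; first exact: prefix_run_rule hD'.
  by rewrite !count_cat ltn_add2r.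
by rewrite !count_cat eq_b.
Qed.

Lemma shortcut_not_accepting D p w :
  shortcut D p -> ca (D ++ w) = cb (D ++ w) -> ~ accepting R F ([::], p, w).
Proof.
move=> [D' [hD' lt_a eq_b]] bal /(prefix_run_accepting hD') /accepted_balanced.
by move: bal; rewrite !count_cat; lia.
Qed.

Definition visited (D : seq letter) (S : seq Q) :=
  {in S, forall s, exists Ds, [/\ prefix_run Ds s, ca Ds <= ca D & cb Ds = cb D]}.

Definition phase (D : seq letter) (p : Q) (r : seq letter) (A : nat) :=
  [\/ shortcut D p,
      exists S, [/\ uniq S, S != [::], visited D S & A <= K * (size S).-1]
    | la \notin r /\ A <= K * N].

Lemma size_bound (S : seq Q) A k :
  S != [::] -> A <= K * (size S).-1 -> k <= K -> A + k <= K * size S.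
Proof.
by move=> nS hA hk; rewrite -(prednK (_ : 0 < size S)) ?lt0n ?size_eq0 // mulnS addnC leq_add.
Qed.

Lemma uniq_bound (S : seq Q) : uniq S -> K * size S <= K * N.
Proof. by move=> uS; rewrite leq_mul2l uniq_size_le ?orbT. Qed.

Lemma phase_rule D p q x u v A :
  (p, x, q) \in R -> x != [::] -> lc \notin x -> (lb \in x -> la \notin v) ->
  prefix_run D p -> phase D p (u ++ x ++ v) A -> phase (D ++ x) q v (A + ca x).
Proof.
move=> hr x_ne x_c ab_order hD [short | [S [uS nS vS hA]] | [no_a hA]].
- by apply: Or31; apply: shortcut_rule short.
- have ca_x_le : ca x <= K := leq_trans (count_size _ _) (rule_size_le hr).
  have hAx := size_bound nS hA ca_x_le.
  case: (boolP (lb \in x)) => [/ab_order no_a|x_b].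
    by apply: Or33; split=> //; apply: leq_trans hAx (uniq_bound uS).
  have cb_x : cb x = 0 by apply/count_memPn.
  have ca_x : 0 < ca x.
    rewrite -has_count has_pred1; apply: contraNT x_ne => x_a.
    by rewrite (no_letter x_a x_b x_c).
  case: (boolP (q \in S)) => [qS|qS].
    apply: Or31; have [Dq [hDq ha hb]] := vS q qS.
    by exists Dq; split=> //; rewrite count_cat; lia.
  apply: Or32; exists (q :: S); split=> //=; first by rewrite qS uS.
  move=> s; rewrite inE => /predU1P[-> | /vS [Ds [hDs ha hb]]].
    by exists (D ++ x); split=> //; apply: prefix_run_rule hD.
  by exists Ds; split=> //; rewrite count_cat; lia.
- move: no_a; rewrite !mem_cat !negb_or => /and3P[_ no_a_x no_a_v].
  by apply: Or33; rewrite (count_memPn no_a_x) addn0.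
Qed.

Lemma phase_bound D p r A : phase D p r A -> shortcut D p \/ A <= K * N.
Proof.
case=> [|[S [uS nS _ hA]]|[_ hA]]; [by left | right | by right].
by rewrite -[A]addn0; apply: leq_trans (size_bound nS hA (leq0n K)) (uniq_bound uS).
Qed.

Lemma phase_last_bound D p x A :
  phase D p x A -> size x <= K -> shortcut D p \/ A + ca x <= K * N.
Proof.
case=> [|[S [uS nS _ hA]]|[no_a hA]] hx; [by left | right | right].
  exact: leq_trans (size_bound nS hA (leq_trans (count_size _ _) hx)) (uniq_bound uS).
by rewrite (count_memPn no_a) addn0.
Qed.

Definition run_any_suffix (W t : seq letter) (p : Q) (r : seq letter) :=
  forall X, star (R_step R) ([::], q0, W ++ X) (t, p, r ++ X).

Definition closed_witness (j p : Q) := exists2 Z, last lc Z != lc &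
  forall X, head_run R p X j -> R_accepts R q0 F (Z ++ X).

Definition open_witness (j : Q) := exists Z, forall x q Y,
  (j, x, q) \in R -> lc \notin x -> head_run R q Y j -> R_accepts R q0 F (Z ++ x ++ Y).

Definition jump_witness (j : Q) (t : seq letter) (p : Q) :=
  closed_witness j p \/ [/\ t = [::], p = j & open_witness j].

Lemma closed_witness_rule j t p x q :
  (p, x, q) \in R -> lc \notin x -> jump_witness j t p -> closed_witness j q.
Proof.
move=> hr x_c hj; have x_ne := R_ne hr.
have last_x Z : last lc (Z ++ x) != lc by rewrite last_cat last_notin.
case: hj => [[Z _ hZ] | [_ <- [Z hZ]]]; exists (Z ++ x) => // X hX; rewrite -catA.
  by apply: hZ; apply: head_run_cons hr hX.
exact: hZ hr x_c hX.
Qed.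

Lemma closed_witness_irrefl p : ~ closed_witness p p.
Proof.
by case=> Z hZ /(_ [::] (head_run_nil R p)) /accepted_last; rewrite cats0 => /eqP; apply/negP.
Qed.

Lemma jump_witness_closed j t p : t != [::] -> jump_witness j t p -> closed_witness j p.
Proof. by move=> t_ne [// | [t0]]; rewrite t0 in t_ne. Qed.

Lemma open_witness_jump W t p y y' :
  run_any_suffix W t p y -> R_avoids R p y -> y = rcons y' lc ->
  accepting R F ([::], p, t ++ y) -> open_witness p.
Proof.
move=> hW hy Ey [qf hqf hst]; exists W => x q Y hr x_c hY; exists qf => //.
apply: star_trans (hW _) _.
have no_straddle : ~ straddles y x.
  move=> [u2 [x1 [u2_ne _ /suffixP [s Es] _ Ex]]]; move/negP: x_c; apply.
  case/lastP: u2 u2_ne Es Ex => // u2 z _; rewrite Ey -rcons_cat => /rcons_inj [_ ->] <-.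
  by rewrite mem_cat mem_rcons mem_head.
apply: (star_step (R_step_del t Y hr hy no_straddle)).
have := hY (t ++ y) [::]; rewrite cats0 => /star_trans; apply.
have ty_ne : t ++ y != [::] by rewrite Ey -rcons_cat -size_eq0 size_rcons.
by have := R_step_jump ty_ne (R_avoids_nil R_ne (p := p)); rewrite cats0 => /star_step; apply.
Qed.

Definition tape (D t r : seq letter) :=
  [/\ ca (D ++ t ++ r) = n, cb (D ++ t ++ r) = n, sorted letter_le (t ++ r)
    & exists2 r', r = rcons r' lc & lc \notin t ++ r'].

Lemma tape_rule D t u x v :
  x != [::] -> lc \notin x -> tape D t (u ++ x ++ v) -> tape (D ++ x) (t ++ u) v.
Proof.
move=> x_ne x_c [hca hcb hs [r' Er r'_c]].
have [v' Ev] : exists v', v = rcons v' lc.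
  case/lastP: v {hca hcb hs} Er => [|v' z].
    rewrite cats0 => /(congr1 (last lc)); rewrite last_rcons last_cat => /eqP.
    by rewrite (negbTE (last_notin _ x_ne x_c)).
  by rewrite -!rcons_cat => /rcons_inj[_ ->]; exists v'.
have Er' : r' = u ++ x ++ v' by move: Er; rewrite Ev -!rcons_cat => /rcons_inj[].
split.
- by move: hca; rewrite !count_cat; lia.
- by move: hcb; rewrite !count_cat; lia.
- apply: (subseq_sorted letter_le_trans _ hs).
  by rewrite -catA !subseq_cat2l suffix_subseq.
- exists v' => //; move: r'_c; rewrite Er' !mem_cat.
  by apply: contra => /orP[/orP[]|] ->; rewrite ?orbT.
Qed.

Lemma tape_c_rule D t u x v :
  lc \in x -> tape D t (u ++ x ++ v) -> v = [::] /\ lc \notin t ++ u.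
Proof.
move=> x_c [_ _ _ [r' Er r'_c]].
case/lastP: v Er => [|v z]; last first.
  rewrite -!rcons_cat => /rcons_inj[Er' _]; move/negP: r'_c; case.
  by rewrite -Er' !mem_cat x_c !orbT.
rewrite cats0; case/lastP: x x_c => // x z _; rewrite -rcons_cat => /rcons_inj[Er' _].
by split=> //; apply: contra r'_c; rewrite -Er' !mem_cat => /orP[] ->; rewrite ?orbT.
Qed.

Lemma tape_jump D t y : tape D t y -> tape D [::] (t ++ y).
Proof.
by case=> hca hcb hs [y' Ey y'_c]; split=> //; exists (t ++ y'); rewrite ?Ey ?rcons_cat.
Qed.

(* In [Inv D W J A], [D] is the word of all letters deleted so far, [J] lists
   the states where a jump happened, each with a witness that is open right
   after that jump and closed once a rule has been applied since, and [A] is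
   the number of letters a deleted since the last jump. *)
Variant inv (t : seq letter) (p : Q) (r : seq letter) : Prop :=
  Inv D W J A of tape D t r & prefix_run D p & run_any_suffix W t p r & uniq J
    & {in J, forall j, jump_witness j t p} & ca D <= size J * (K * N) + A
    & phase D p r A.

Lemma inv_start : inv [::] q0 (nseq n la ++ nseq n lb ++ [:: lc]).
Proof.
set G := nseq n la ++ _.
have G_sorted : sorted letter_le G.
  by apply: sorted_nseq_cat; [apply/allP | apply: sorted_nseq_cat].
apply: (@Inv _ _ _ [::] G [::] 0) => //.
- split=> //; rewrite ?count_cat ?count_nseq /= ?mul1n ?mul0n ?addn0 //.
  exists (nseq n la ++ nseq n lb); first by rewrite /G -cats1 catA.
  by rewrite mem_cat !mem_nseq !andbF.
- by move=> T; apply: star_refl.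
- by move=> X; apply: star_refl.
apply: Or32; exists [:: q0]; split=> // s; rewrite inE => /eqP ->.
by exists [::]; split=> // T; apply: star_refl.
Qed.

Lemma inv_rule t p q u x v :
  (p, x, q) \in R -> R_avoids R p u -> ~ straddles u x -> lc \notin x ->
  inv t p (u ++ x ++ v) -> inv (t ++ u) q v.
Proof.
move=> hr hu no_straddle x_c [D W J A ht hD hW uJ hJ hA hph].
have x_ne := R_ne hr.
apply: (@Inv _ _ _ (D ++ x) W J (A + ca x)) => //.
- exact: tape_rule.
- exact: prefix_run_rule hD.
- move=> X; have := hW X; rewrite -!catA => /star_trans; apply.
  exact: star1 (R_step_del t (v ++ X) hr hu no_straddle).
- by move=> j /hJ hj; left; apply: closed_witness_rule hr x_c hj.
- by rewrite count_cat; lia.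
apply: phase_rule hr x_ne x_c _ hD hph => x_b.
case: ht => _ _ hs _; apply: (sorted_b_notin_a (s1 := t ++ u ++ x)); first by rewrite -!catA.
by rewrite !mem_cat x_b !orbT.
Qed.

Lemma inv_c_rule_not_accepting (t u x v : seq letter) p q :
  (p, x, q) \in R -> lc \in x -> inv t p (u ++ x ++ v) -> ~ accepting R F (t ++ u, q, v).
Proof.
move=> hr x_c [D W J A ht hD _ uJ _ hA hph].
have [v0 tu_c] := tape_c_rule x_c ht; subst v.
move=> /(accepting_right_nil R_ne) [[tu0 qF] | [tu_ne acc]]; last first.
  move: (prefix_run_accepting (prefix_run_rule hr hD) acc) => /accepted_last /eqP.
  by rewrite last_cat (negbTE (last_notin _ tu_ne tu_c)).
move/nilP: tu0; rewrite cat_nilp => /andP[/nilP t0 /nilP u0]; subst t u.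
case: ht => hca hcb _ _; rewrite /= cats0 in hca hcb hph.
have acc_px : accepting R F ([::], p, x).
  by exists q => //; apply: star1; have := R_step_head R_ne [::] [::] hr; rewrite cats0.
have [short|hAx] := phase_last_bound hph (rule_size_le hr).
  by apply: shortcut_not_accepting short _ acc_px; rewrite hca hcb.
by move: (count_bound hA hAx (uniq_size_le uJ)); rewrite -count_cat hca ltnn.
Qed.

Lemma inv_jump t p y : t != [::] -> R_avoids R p y ->
  accepting R F ([::], p, t ++ y) -> inv t p y -> inv [::] p (t ++ y).
Proof.
move=> t_ne hy acc [D W J A ht hD hW uJ hJ hA hph].
have [short|hA_le] := phase_bound hph.
  by case: ht => hca hcb _ _; case: (shortcut_not_accepting short _ acc); rewrite hca hcb.
have pJ : p \notin J.
  by apply/negP => /hJ /(jump_witness_closed t_ne) /closed_witness_irrefl.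
have [_ _ _ [y' Ey _]] := ht.
apply: (@Inv _ _ _ D (D ++ t ++ y) (p :: J) 0).
- exact: tape_jump.
- exact: hD.
- by move=> X; rewrite -!catA; apply: hD.
- by rewrite /= pJ.
- move=> j; rewrite inE => /predU1P[-> | /hJ /(jump_witness_closed t_ne) hj]; last by left.
  by right; split=> //; apply: open_witness_jump hW hy Ey acc.
- by apply: leq_trans hA _; rewrite /= mulSn addn0 addnC leq_add2r.
apply: Or32; exists [:: p]; split=> // s; rewrite inE => /eqP ->.
by exists D.
Qed.

Lemma inv_not_accepting t p r : inv t p r -> ~ accepting R F (t, p, r).
Proof.
move=> hI [qf hqf hst].
move Es: (t, p, r) hst hI => c; move Ef: ([::], qf, [::]) => c' hst.
elim: hst t p r Es Ef => [c0|c1 c2 c3 hstep hst IH] t p r Es Ef hI.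
  case: hI => D W J A [_ _ _ [r' Er _]] *.
  by move: Es Ef Er => <- [_ _ <-]; case: r'.
case: hstep Es hst IH => [t0 u v x p0 q hr hu hn|x y p0 x_ne hy] [? ? ?] hst IH; subst.
  case: (boolP (lc \in x)) => x_c.
    by apply: (inv_c_rule_not_accepting hr x_c hI); exists qf.
  exact: (IH _ _ _ erefl erefl (inv_rule hr hu hn x_c hI)).
apply: (IH _ _ _ erefl erefl); apply: inv_jump x_ne hy _ hI.
by exists qf.
Qed.

Lemma balanced_c_automaton_absurd : False.
Proof.
apply: (inv_not_accepting inv_start); apply/R_lang.
exists (nseq n la ++ nseq n lb); first by rewrite -cats1 catA.
by rewrite /balanced mem_cat !mem_nseq !andbF !count_cat !count_nseq /= mul1n mul0n addn0.
Qed.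

End BalancedCAutomaton.

Lemma balanced_c_not_GRLOWJ : ~ GRLOWJ balanced_c.
Proof.
by case=> Q [q0 [F [R [R_ne _ R_lang]]]]; apply: balanced_c_automaton_absurd R_ne R_lang.
Qed.

Theorem proposition2 :
  (exists (S : finType) (L : language S), GRLOWJ L /\ ~ GLLOWJ L) /\
  (exists (S : finType) (L : language S), GLLOWJ L /\ ~ GRLOWJ L).
Proof.
have c_balanced_rev w : c_balanced (rev w) <-> balanced_c w.
  by rewrite -balanced_c_rev revK.
split; [exists _, c_balanced | exists _, balanced_c]; split.
- exact: c_balanced_GRLOWJ.
- move/GLLOWJ_GRLOWJ_rev/(GRLOWJ_ext c_balanced_rev).
  exact: balanced_c_not_GRLOWJ.
- apply/GLLOWJ_GRLOWJ_rev; apply: GRLOWJ_ext c_balanced_GRLOWJ => w.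
  by rewrite balanced_c_rev.
- exact: balanced_c_not_GRLOWJ.
Qed.
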